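(* Let $I$ and ${\cal Q}_I$ be as in the context, let $G'$ be a chordal sandwich of $({\rm int^*}({\cal Q}_I),{\rm forb}({\cal Q}_I))$, and let $1\le i\le n$. Then: (a) there is $W\in\{v_i,\overline{v_i}\}$ such that for all $j\in\Delta_i$, the vertex $K^j_W$ is adjacent to $B$ in $G'$; (b) for each $j\in\Delta_i$ and each $W\in\{v_i,\overline{v_i}\}$, if $K^j_W$ is adjacent to $B$ in $G'$, then each of the vertices $S^j_W$, $K^j_W$, and $L^j_W$ (if $L^j_W$ is defined) is adjacent in $G'$ to each of $B$, $A_i$, $H_W$, $H_{\overline W}$, $F^j$.
   Context: Instance: $I$ has variables $v_1,\ldots,v_n$ and clauses ${\cal C}_1,\ldots,{\cal C}_m$; each clause is an ordered triple of literals ${\cal C}_j=X\vee Y\vee Z$ with no variable occurring twice in a clause. Literals are $v_i$ or $\overline{v_i}$; $\overline W$ is the negation of $W$. $\Delta_i$ is the set of $j$ such that $v_i$ or $\overline{v_i}$ occurs in ${\cal C}_j$. Ground set ${\cal X}_I$: $\alpha_{v_i},\alpha_{\overline{v_i}}$; $\beta^j_{v_i},\beta^j_{\overline{v_i}}$ ($j\in\Delta_i$); $\gamma^j_1,\gamma^j_2,\gamma^j_3,\lambda^j$ ($1\le j\le m$); $\delta,\mu$. Sets: $B=\{\mu,\delta\}$, $H_{v_i}=\{\alpha_{v_i},\delta\}$, $H_{\overline{v_i}}=\{\alpha_{\overline{v_i}},\delta\}$, $A_i=\{\alpha_{v_i},\alpha_{\overline{v_i}}\}$, $S^j_{v_i}=\{\alpha_{v_i},\beta^j_{v_i}\}$,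 $S^j_{\overline{v_i}}=\{\alpha_{\overline{v_i}},\beta^j_{\overline{v_i}}\}$ ($j\in\Delta_i$); for ${\cal C}_j=X\vee Y\vee Z$: $K^j_{\overline X}=\{\beta^j_X,\gamma^j_1\}$, $K^j_{\overline Y}=\{\beta^j_Y,\gamma^j_2\}$, $K^j_{\overline Z}=\{\beta^j_Z,\gamma^j_3\}$, $K^j_X=\{\beta^j_{\overline X},\lambda^j\}$, $K^j_Y=\{\beta^j_{\overline Y},\lambda^j\}$, $K^j_Z=\{\beta^j_{\overline Z},\lambda^j\}$, $L^j_X=\{\beta^j_{\overline X},\gamma^j_2\}$, $L^j_Y=\{\beta^j_{\overline Y},\gamma^j_3\}$, $L^j_Z=\{\beta^j_{\overline Z},\gamma^j_1\}$ (so $L^j_W$ is defined only for the three literals $W$ occurring in ${\cal C}_j$), $D^j_p=\{\gamma^j_p,\lambda^j\}$, $F^j=\{\lambda^j,\mu\}$. Objects indexed by a literal mean the one for that literal. ${\cal Q}_I$ is the collection of partial splits: $A_i|B$; $D^j_p|B$ ($p=1,2,3$); $S^j_{v_i}|S^{j'}_{\overline{v_i}}$ ($j,j'\in\Delta_i$); $S^j_{v_i}|K^{j'}_{\overline{v_i}}$, $S^j_{\overline{v_i}}|K^{j'}_{v_i}$ ($j<j'$ in $\Delta_i$); $K^j_{\overline{v_i}}|F^{j'}$, $K^j_{v_i}|F^{j'}$ ($j\in\Delta_i$, $j<j'\le m$); $H_{v_{i'}}|S^j_{v_i}$, $H_{\overline{v_{i'}}}|S^j_{v_i}$, $H_{v_{i'}}|S^j_{\overline{v_i}}$,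 $H_{\overline{v_{i'}}}|S^j_{\overline{v_i}}$ ($1\le i'<i\le n$, $j\in\Delta_i$); $H_{\overline{v_i}}|F^j$, $H_{v_i}|F^j$ (all $i,j$); for each ${\cal C}_j=X\vee Y\vee Z$: $K^j_{\overline X}|K^j_X$, $K^j_{\overline Y}|K^j_Y$, $K^j_{\overline Z}|K^j_Z$, $K^j_{\overline X}|L^j_X$, $K^j_{\overline Y}|L^j_Y$, $K^j_{\overline Z}|L^j_Z$, $S^j_Y|K^j_X$, $S^j_Z|K^j_Y$, $S^j_X|K^j_Z$, $S^j_Z|L^j_X$, $S^j_X|L^j_Y$, $S^j_Y|L^j_Z$. ${\rm int^*}({\cal Q}_I)$: vertices are the 2-sets occurring as cells of members of ${\cal Q}_I$, adjacent iff they intersect. ${\rm forb}({\cal Q}_I)$: same vertices, $P,P'$ adjacent iff $P|P'\in{\cal Q}_I$. A chordal sandwich of $(G_1,G_2)$ (edge-disjoint, same vertex set) is a chordal graph (no induced cycle of length $\ge4$) on that vertex set containing all edges of $G_1$ and none of $G_2$. *)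

From HB Require Import structures.
From mathcomp Require Import all_boot.
From mathcomp Require Import finmap.
Set Implicit Arguments. Unset Strict Implicit. Unset Printing Implicit Defensive.
Local Open Scope fset_scope.

(* A literal is (i, b): b = true means v_i, b = false means ~v_i. *)
Definition lit := (nat * bool)%type.
Definition negl (W : lit) : lit := (W.1, ~~ W.2).
Definition posv (i : nat) : lit := (i, true).
Definition negv (i : nat) : lit := (i, false).

(* A clause is an ordered triple X \/ Y \/ Z. *)
Definition clause := (lit * lit * lit)%type.

Inductive elt :=
| EAlpha of lit
| EBeta of nat & lit
| EGamma of nat & nat
| ELambda of nat
| EDelta
| EMu.

Definition elt_code (e : elt) : (lit + (nat * lit) + (nat * nat) + nat + bool)%type :=
  match e with
  | EAlpha l => inl (inl (inl (inl l)))
  | EBeta j l => inl (inl (inl (inr (j, l))))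
  | EGamma j p => inl (inl (inr (j, p)))
  | ELambda j => inl (inr j)
  | EDelta => inr true
  | EMu => inr false
  end.
Definition elt_decode (c : (lit + (nat * lit) + (nat * nat) + nat + bool)%type) : elt :=
  match c with
  | inl (inl (inl (inl l))) => EAlpha l
  | inl (inl (inl (inr (j, l)))) => EBeta j l
  | inl (inl (inr (j, p))) => EGamma j p
  | inl (inr j) => ELambda j
  | inr true => EDelta
  | inr false => EMu
  end.
Lemma elt_codeK : cancel elt_code elt_decode. Proof. by case. Qed.
HB.instance Definition _ := Countable.copy elt (can_type elt_codeK).

Definition vtx := {fset elt}.

Section Construction.
Variables (n : nat) (cl : seq clause).

Definition m := size cl.
Definition dclause : clause := ((0, true), (0, true), (0, true)).
(* C_j, for 1 <= j <= m *)
Definition clause_of (j : nat) : clause := nth dclause cl j.-1.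
Definition lit_at (j p : nat) : lit :=
  let: (X, Y, Z) := clause_of j in
  match p with 1 => X | 2 => Y | _ => Z end.
Definition pos (j : nat) (W : lit) : option nat :=
  let: (X, Y, Z) := clause_of j in
  if X.1 == W.1 then Some 1 else if Y.1 == W.1 then Some 2
  else if Z.1 == W.1 then Some 3 else None.

Definition inDelta (i j : nat) : bool :=
  (1 <= j <= m) && (pos j (posv i) != None).

Definition wf_lit (W : lit) : bool := (1 <= W.1 <= n).
Definition wf_clause (c : clause) : bool :=
  let: (X, Y, Z) := c in
  [&& wf_lit X, wf_lit Y, wf_lit Z, X.1 != Y.1, X.1 != Z.1 & Y.1 != Z.1].
Definition wf_instance : bool := all wf_clause cl.

Definition B : vtx := [fset EMu; EDelta].
Definition H (W : lit) : vtx := [fset EAlpha W; EDelta].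
Definition A (i : nat) : vtx := [fset EAlpha (posv i); EAlpha (negv i)].
Definition S (j : nat) (W : lit) : vtx := [fset EAlpha W; EBeta j W].
(* K^j_W for W with variable in C_j: if W is the literal at position p,
   K^j_W = {beta^j_{~W}, lambda^j}; if ~W is the literal at position p,
   K^j_W = {beta^j_{~W}, gamma^j_p}.  (Junk fset0 if undefined; never used.) *)
Definition K (j : nat) (W : lit) : vtx :=
  match pos j W with
  | Some p => if lit_at j p == W then [fset EBeta j (negl W); ELambda j]
              else [fset EBeta j (negl W); EGamma j p]
  | None => fset0
  end.
(* L^j_W, defined only for literals W occurring in C_j:
   L^j_X = {beta_{~X}, gamma_2}, L^j_Y = {beta_{~Y}, gamma_3},
   L^j_Z = {beta_{~Z}, gamma_1} *)
Definition Lopt (j : nat) (W : lit) : option vtx :=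
  match pos j W with
  | Some p => if lit_at j p == W
              then Some [fset EBeta j (negl W); EGamma j (p %% 3).+1]
              else None
  | None => None
  end.
Definition L (j : nat) (W : lit) : vtx := odflt fset0 (Lopt j W).
Definition D (j p : nat) : vtx := [fset EGamma j p; ELambda j].
Definition F (j : nat) : vtx := [fset ELambda j; EMu].

Definition inQ (P P' : vtx) : Prop :=
  (exists i, 1 <= i <= n /\ P = A i /\ P' = B)
  \/ (exists j p, 1 <= j <= m /\ 1 <= p <= 3 /\ P = D j p /\ P' = B)
  \/ (exists i j j', 1 <= i <= n /\ inDelta i j /\ inDelta i j' /\
        P = S j (posv i) /\ P' = S j' (negv i))
  \/ (exists i j j', 1 <= i <= n /\ inDelta i j /\ inDelta i j' /\ j < j' /\
        ((P = S j (posv i) /\ P' = K j' (negv i)) \/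
         (P = S j (negv i) /\ P' = K j' (posv i))))
  \/ (exists i j j', 1 <= i <= n /\ inDelta i j /\ j < j' <= m /\
        (P = K j (negv i) \/ P = K j (posv i)) /\ P' = F j')
  \/ (exists i' i j, 1 <= i' /\ i' < i /\ i <= n /\ inDelta i j /\
        (P = H (posv i') \/ P = H (negv i')) /\
        (P' = S j (posv i) \/ P' = S j (negv i)))
  \/ (exists i j, 1 <= i <= n /\ 1 <= j <= m /\
        (P = H (negv i) \/ P = H (posv i)) /\ P' = F j)
  \/ (exists j, 1 <= j <= m /\
        let: (X, Y, Z) := clause_of j in
        ((P = K j (negl X) /\ P' = K j X) \/ (P = K j (negl Y) /\ P' = K j Y) \/
         (P = K j (negl Z) /\ P' = K j Z) \/ (P = K j (negl X) /\ P' = L j X) \/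
         (P = K j (negl Y) /\ P' = L j Y) \/ (P = K j (negl Z) /\ P' = L j Z) \/
         (P = S j Y /\ P' = K j X) \/ (P = S j Z /\ P' = K j Y) \/
         (P = S j X /\ P' = K j Z) \/ (P = S j Z /\ P' = L j X) \/
         (P = S j X /\ P' = L j Y) \/ (P = S j Y /\ P' = L j Z))).

Definition QV (P : vtx) : Prop := exists P', inQ P P' \/ inQ P' P.

Definition int_star (P P' : vtx) : Prop :=
  QV P /\ QV P' /\ P != P' /\ P `&` P' != fset0.

Definition forb (P P' : vtx) : Prop := inQ P P' \/ inQ P' P.

End Construction.

Definition simple_graph_on (T : Type) (V : T -> Prop) (G : T -> T -> Prop) : Prop :=
  (forall x y, G x y -> G y x) /\ (forall x, ~ G x x) /\
  (forall x y, G x y -> V x /\ V y).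

Definition chordal (T : eqType) (V : T -> Prop) (G : T -> T -> Prop) : Prop :=
  forall (s : seq T) (x0 : T), 4 <= size s -> uniq s -> (forall x, x \in s -> V x) ->
    (forall k, k < size s -> G (nth x0 s k) (nth x0 s (k.+1 %% size s))) ->
    exists k l, [/\ k < size s, l < size s, k != l,
                 (l != k.+1 %% size s) && (k != l.+1 %% size s) &
                 G (nth x0 s k) (nth x0 s l)].

Definition chordal_sandwich (T : eqType) (V : T -> Prop) (G1 G2 G : T -> T -> Prop) : Prop :=
  [/\ simple_graph_on V G, chordal V G,
      (forall x y, G1 x y -> G x y) & (forall x y, G2 x y -> ~ G x y)].

(* Write X for the literal of v_i at its position p in C_j.  Part (b) is local to C_j:
   the 2-sets of Q_I built from v_i and C_j form a twelve-vertex gadget, and every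
   required adjacency is forced because some short cycle of the gadget would otherwise
   be chordless.  The key step is a hexagon lemma: on a 6-cycle p0 ... p5 of a chordal
   graph in which p0, p2 and p1, p5 are nonadjacent, p0 is adjacent to p3 or p4.  Applied
   at p0 = B to the hexagons B F D_p K_~X S_X H_X and B H_X A_i S_~X K_X F, it shows
   that B sees S_X unless it sees K_~X, and sees S_~X unless it sees K_X; and B cannot
   see both K_X and K_~X, as the square B K_X D_p K_~X would be chordless.
   For (a): if some K^j0_(v_i) and some K^j_(~v_i) miss B, then B sees S^j0_(~v_i) and
   S^j_(v_i), and these close a chordless square with A_i, because A_i|B and
   S^j_(v_i)|S^j0_(~v_i) are in Q_I. *)

From HB Require Import structures.
From mathcomp Require Import all_boot finmap.
From Stdlib Require Import Classical.
Set Implicit Arguments. Unset Strict Implicit. Unset Printing Implicit Defensive.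

(* [chordless ch cyc side edge nonedge] closes the goal by applying the chordality
   hypothesis [ch] to the cycle [cyc] (of length at most six): [side] proves that [cyc]
   is duplicate-free and inside the vertex set, [edge] proves its edges and [nonedge]
   refutes each of its possible chords. *)
Ltac chordless chordal_hyp cyc side edge nonedge :=
  let v0 := lazymatch cyc with ?v :: _ => v end in
  move: (chordal_hyp) => /(_ cyc v0 isT) [];
  [ side | side | case=> [|[|[|[|[|[|?]]]]]] //= _; edge
  | move=> [|[|[|[|[|[|?]]]]]] [[|[|[|[|[|[|?]]]]]] []] //= _ _ _ _; nonedge ].

Lemma uniq4 (T : eqType) (a b c d : T) :
  a != b -> a != c -> a != d -> b != c -> b != d -> c != d -> uniq [:: a; b; c; d].
Proof. by move=> ab ac ad bc bd cd; rewrite /= !inE !negb_or ab ac ad bc bd cd. Qed.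

Section ChordalGraph.
Variables (T : eqType) (V : T -> Prop) (g : T -> T -> Prop).
Hypotheses (g_sym : forall x y, g x y -> g y x) (g_chordal : chordal V g).

Local Ltac side := first
  [ assumption
  | by rewrite /= !inE !negb_or; repeat (apply/andP; split); first [done | rewrite eq_sym; assumption]
  | move=> y; rewrite !inE; repeat case/orP; move/eqP->;
    match goal with H : forall z, _ -> V z |- _ => apply: H end;
    by rewrite !inE eqxx ?orbT ].
Local Ltac edge := first [ assumption | by apply: g_sym ].
Local Ltac nonedge := first [ move=> h; contradiction | move=> /g_sym h; contradiction ].
Local Ltac by_cycle c := chordless g_chordal c side edge nonedge.

Lemma square_chord a b c d :
  uniq [:: a; b; c; d] -> (forall x, x \in [:: a; b; c; d] -> V x) ->
  g a b -> g b c -> g c d -> g d a -> g a c \/ g b d.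
Proof.
move=> U inV ab bc cd da; apply: NNPP => /not_or_and [nac nbd].
by by_cycle [:: a; b; c; d].
Qed.

Lemma hexagon_chord p0 p1 p2 p3 p4 p5 :
  uniq [:: p0; p1; p2; p3; p4; p5] -> (forall x, x \in [:: p0; p1; p2; p3; p4; p5] -> V x) ->
  g p0 p1 -> g p1 p2 -> g p2 p3 -> g p3 p4 -> g p4 p5 -> g p5 p0 ->
  ~ g p0 p2 -> ~ g p1 p5 -> g p0 p3 \/ g p0 p4.
Proof.
move=> U inV e01 e12 e23 e34 e45 e50 n02 n15.
move: (U); rewrite /= !inE !negb_or -!andbA; repeat case/andP=> ?; move=> _.
apply: NNPP => /not_or_and [n03 n04].
have n25 : ~ g p2 p5 by move=> ?; by_cycle [:: p0; p1; p2; p5].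
have [e35 | n35] := classic (g p3 p5).
  have n13 : ~ g p1 p3 by move=> ?; by_cycle [:: p0; p1; p3; p5].
  by by_cycle [:: p0; p1; p2; p3; p5].
have n14 : ~ g p1 p4 by move=> ?; by_cycle [:: p0; p1; p4; p5].
have n24 : ~ g p2 p4 by move=> ?; by_cycle [:: p0; p1; p2; p4; p5].
have n13 : ~ g p1 p3 by move=> ?; by_cycle [:: p0; p1; p3; p4; p5].
by by_cycle [:: p0; p1; p2; p3; p4; p5].
Qed.

Lemma chordal_comap (T' : eqType) (f : T' -> T) :
  injective f -> (forall x, V (f x)) -> chordal (fun _ => True) (fun x y => g (f x) (f y)).
Proof.
move=> f_inj fV s x0 s_ge4 s_uniq _ s_cycle.
case: (g_chordal (s := map f s) (x0 := f x0)); rewrite ?size_map //.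
- by rewrite map_inj_uniq.
- by move=> _ /mapP[x _ ->].
- move=> k k_lt; rewrite !(nth_map x0) ?ltn_pmod //; first exact: s_cycle.
  exact: leq_trans s_ge4.
by move=> k [l [k_lt l_lt kl adj]]; rewrite !(nth_map x0) // => e; exists k, l.
Qed.

End ChordalGraph.

Local Open Scope fset_scope.

Lemma fset2_neq (T : choiceType) (x y a b : T) : x != a -> x != b -> [fset x; y] != [fset a; b].
Proof. by move=> xa xb; apply/eqP => /fsetP/(_ x); rewrite !inE eqxx (negbTE xa) (negbTE xb). Qed.

Lemma fset2_neq_r (T : choiceType) (x y a b : T) : y != a -> y != b -> [fset x; y] != [fset a; b].
Proof. by move=> ya yb; apply/eqP => /fsetP/(_ y); rewrite !inE eqxx orbT (negbTE ya) (negbTE yb). Qed.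

Lemma neglK : involutive negl.
Proof. by case=> i b; rewrite /negl negbK. Qed.

Lemma negl_neq W : negl W != W.
Proof. by case: W => i [] /=; rewrite /negl /= xpair_eqE andbF. Qed.

Lemma succ_mod3_neq p : (p %% 3).+1 != p.
Proof.
case: (ltnP p 4) => [|p_ge4]; first by case: p => [|[|[|[|]]]].
by rewrite neq_ltn (leq_ltn_trans (ltn_pmod p (isT : 0 < 3)) p_ge4).
Qed.

Lemma lit_eq_or_negl W W' : W.1 = W'.1 -> W = W' \/ W = negl W'.
Proof. by case: W W' => [a b] [c d] /= <-; case: b; case: d; [left | right | right | left]. Qed.

Section Construction.
Variable cl : seq clause.

Lemma pos_var j W W' : W.1 = W'.1 -> pos cl j W = pos cl j W'.
Proof. by rewrite /pos => ->. Qed.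

Lemma pos_range j W p : pos cl j W = Some p -> 1 <= p <= 3.
Proof. by rewrite /pos; case: (clause_of cl j) => [[X Y] Z]; repeat case: ifP => _; try move=> [<-]. Qed.

Lemma lit_at_pos j W p : pos cl j W = Some p -> (lit_at cl j p).1 = W.1.
Proof.
rewrite /pos /lit_at; case: (clause_of cl j) => [[X Y] Z].
by repeat case: ifP => [/eqP ? [<-] //|_].
Qed.

Section AtPosition.
Variables (j p : nat) (W : lit).
Hypotheses (W_pos : pos cl j W = Some p) (W_at : lit_at cl j p = W).

Lemma K_lit : K cl j W = [fset EBeta j (negl W); ELambda j].
Proof. by rewrite /K W_pos W_at eqxx. Qed.

Lemma K_negl_lit : K cl j (negl W) = [fset EBeta j W; EGamma j p].
Proof.
by rewrite /K (@pos_var j (negl W) W erefl) W_pos W_at eq_sym (negbTE (negl_neq W)) neglK.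
Qed.

Lemma Lopt_lit : Lopt cl j W = Some [fset EBeta j (negl W); EGamma j (p %% 3).+1].
Proof. by rewrite /Lopt W_pos W_at eqxx. Qed.

Lemma Lopt_negl_lit : Lopt cl j (negl W) = None.
Proof.
by rewrite /Lopt (@pos_var j (negl W) W erefl) W_pos W_at eq_sym (negbTE (negl_neq W)).
Qed.
End AtPosition.
End Construction.

Section Forbidden.
Variables (n : nat) (cl : seq clause).

Lemma forb_sym P Q : forb n cl P Q -> forb n cl Q P.
Proof. by case; [right | left]. Qed.

Lemma QV_forb P Q : forb n cl P Q -> QV n cl P.
Proof. by exists Q. Qed.

Lemma forb_A_B i : 1 <= i <= n -> forb n cl (A i) B.
Proof. by move=> hi; left; left; exists i. Qed.

Lemma forb_D_B j p : 1 <= j <= m cl -> 1 <= p <= 3 -> forb n cl (D j p) B.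
Proof. by move=> hj hp; left; right; left; exists j, p. Qed.

Lemma forb_S_S i j j' : 1 <= i <= n -> inDelta cl i j -> inDelta cl i j' ->
  forb n cl (S j (posv i)) (S j' (negv i)).
Proof. by move=> hi hj hj'; left; do 2 right; left; exists i, j, j'. Qed.

Lemma forb_H_F W j : 1 <= W.1 <= n -> 1 <= j <= m cl -> forb n cl (H W) (F j).
Proof.
case: W => i b /= hi hj; left; do 6 right; left; exists i, j.
by do 2 split=> //; split=> //; case: b; [right | left].
Qed.

Lemma forb_K_K j p : 1 <= j <= m cl -> 1 <= p <= 3 ->
  forb n cl (K cl j (negl (lit_at cl j p))) (K cl j (lit_at cl j p)).
Proof.
move=> hj hp; left; do 7 right; exists j; split=> //.
rewrite /lit_at; case: (clause_of cl j) => [[X Y] Z].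
by case: p hp => [|[|[|[|p]]]] //= _; [left | right; left | do 2 right; left].
Qed.

Lemma forb_K_L j p : 1 <= j <= m cl -> 1 <= p <= 3 ->
  forb n cl (K cl j (negl (lit_at cl j p))) (L cl j (lit_at cl j p)).
Proof.
move=> hj hp; left; do 7 right; exists j; split=> //.
rewrite /lit_at; case: (clause_of cl j) => [[X Y] Z].
by case: p hp => [|[|[|[|p]]]] //= _; [do 3 right; left | do 4 right; left | do 5 right; left].
Qed.
End Forbidden.

(* The gadget of C_j around X, with suffix [n] for the negated literal ~X: vertex [vL] is
   L^j_X, [vDp] and [vDq] are D^j_p and D^j_q with q = p mod 3 + 1, and [eGammaP],
   [eGammaQ] are gamma^j_p, gamma^j_q.  On these names, equality and intersection of
   vertices are decided by computation. *)
Inductive gadget_elt := eMu | eDelta | eLambda | eGammaP | eGammaQ | eAlpha | eAlphaN | eBeta | eBetaN.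
Inductive gadget_vert := vB | vA | vH | vHn | vF | vDp | vDq | vS | vSn | vK | vKn | vL.
Scheme Equality for gadget_elt.
Scheme Equality for gadget_vert.
HB.instance Definition _ := hasDecEq.Build gadget_elt
  (fun x y => iffP idP (@internal_gadget_elt_dec_bl x y) (@internal_gadget_elt_dec_lb x y)).
HB.instance Definition _ := hasDecEq.Build gadget_vert
  (fun x y => iffP idP (@internal_gadget_vert_dec_bl x y) (@internal_gadget_vert_dec_lb x y)).

Definition gadget_cells (v : gadget_vert) : gadget_elt * gadget_elt :=
  match v with
  | vB => (eMu, eDelta) | vA => (eAlpha, eAlphaN) | vH => (eAlpha, eDelta)
  | vHn => (eAlphaN, eDelta) | vF => (eLambda, eMu) | vDp => (eGammaP, eLambda)
  | vDq => (eGammaQ, eLambda) | vS => (eAlpha, eBeta) | vSn => (eAlphaN, eBetaN)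
  | vK => (eBetaN, eLambda) | vKn => (eBeta, eGammaP) | vL => (eBetaN, eGammaQ)
  end.

Definition gadget_cell_seq (v : gadget_vert) : seq gadget_elt :=
  [:: (gadget_cells v).1; (gadget_cells v).2].

Definition gadget_meets (u v : gadget_vert) : bool :=
  has (mem (gadget_cell_seq v)) (gadget_cell_seq u).

Definition gadget_separated (u v : gadget_vert) : bool :=
  let forbidden := [:: (vA, vB); (vDp, vB); (vDq, vB); (vH, vF); (vHn, vF);
                       (vS, vSn); (vKn, vK); (vKn, vL)] in
  ((u, v) \in forbidden) || ((v, u) \in forbidden).

Section GadgetGraph.
Variable g : gadget_vert -> gadget_vert -> Prop.
Hypotheses (g_sym : forall u v, g u v -> g v u) (g_chordal : chordal (fun _ => True) g).
Hypotheses (g_meets : forall u v, u != v -> gadget_meets u v -> g u v)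
           (g_separated : forall u v, gadget_separated u v -> ~ g u v).

Local Ltac edge := first [ done | by apply: g_sym | by apply: g_meets ].
Local Ltac nonedge := first [ move=> h; contradiction | move=> /g_sym h; contradiction
                            | by apply: g_separated | by move/g_sym; apply: g_separated ].
Local Ltac by_cycle c := chordless g_chordal c ltac:(done) edge nonedge.
Local Ltac by_hexagon p0 p1 p2 p3 p4 p5 :=
  case: (hexagon_chord g_sym g_chordal (p0 := p0) (p1 := p1) (p2 := p2) (p3 := p3) (p4 := p4) (p5 := p5));
  try done; try edge; try nonedge; try by let h := fresh in intro h; exfalso; revert h; nonedge.

Lemma gadget_KB_not_KnB : g vK vB -> ~ g vKn vB.
Proof. by move=> KB KnB; by_cycle [:: vB; vK; vDp; vKn]. Qed.

Lemma gadget_SB_of_not_KnB : ~ g vKn vB -> g vS vB.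
Proof. by move=> nKnB; by_hexagon vB vF vDp vKn vS vH. Qed.

Lemma gadget_SnB_of_not_KB : ~ g vK vB -> g vSn vB.
Proof. by move=> nKB; by_hexagon vB vH vA vSn vK vF. Qed.

Lemma gadget_adjacent_of_KB : g vK vB ->
  forall P R, P \in [:: vS; vK; vL] -> R \in [:: vB; vA; vH; vHn; vF] -> g P R.
Proof.
move=> KB; have nKnB := gadget_KB_not_KnB KB; have SB := gadget_SB_of_not_KnB nKnB.
have nSnB : ~ g vSn vB by move=> ?; by_cycle [:: vB; vS; vA; vSn].
have SHn : g vS vHn by apply: NNPP => ?; by_cycle [:: vB; vHn; vA; vS].
have HnK : g vHn vK by apply: NNPP => ?; by_cycle [:: vB; vHn; vSn; vK].
have nHnDp : ~ g vHn vDp by move=> ?; by_cycle [:: vB; vHn; vDp; vF].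
have nHnKn : ~ g vHn vKn by move=> ?; by_cycle [:: vHn; vK; vDp; vKn].
have SF : g vS vF.
  apply: NNPP => nSF.
  have nDpS : ~ g vDp vS by move=> ?; by_cycle [:: vB; vF; vDp; vS].
  have nSK : ~ g vS vK by move=> ?; by_cycle [:: vDp; vK; vS; vKn].
  by by_cycle [:: vHn; vS; vKn; vDp; vK].
have nAF : ~ g vA vF by move=> ?; by_cycle [:: vB; vH; vA; vF].
have nSnF : ~ g vSn vF by move=> ?; by_cycle [:: vB; vHn; vSn; vF].
have KA : g vK vA.
  apply: NNPP => ?.
  have nSK : ~ g vS vK by move=> ?; by_cycle [:: vA; vS; vK; vSn].
  by by_cycle [:: vA; vS; vF; vK; vSn].
have KH : g vK vH by apply: NNPP => ?; by_cycle [:: vB; vH; vA; vK].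
have LB : g vL vB by by_hexagon vB vHn vSn vL vDq vF.
have LF : g vL vF by apply: NNPP => ?; by_cycle [:: vB; vF; vDq; vL].
have LA : g vL vA.
  apply: NNPP => ?.
  have nSL : ~ g vS vL by move=> ?; by_cycle [:: vA; vS; vL; vSn].
  by by_cycle [:: vA; vS; vF; vL; vSn].
have LH : g vL vH by apply: NNPP => ?; by_cycle [:: vB; vH; vA; vL].
have LHn : g vL vHn by apply: NNPP => ?; by_cycle [:: vB; vHn; vA; vL].
by move=> [] [] //= _ _; edge.
Qed.

Lemma gadget_adjacent_of_KnB : g vKn vB ->
  forall P R, P \in [:: vSn; vKn] -> R \in [:: vB; vA; vH; vHn; vF] -> g P R.
Proof.
move=> KnB; have nKB : ~ g vK vB by move=> /gadget_KB_not_KnB; apply.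
have SnB := gadget_SnB_of_not_KB nKB.
have KnF : g vKn vF by apply: NNPP => ?; by_cycle [:: vB; vF; vDp; vKn].
have SnH : g vSn vH by apply: NNPP => ?; by_cycle [:: vB; vH; vA; vSn].
have SnF : g vSn vF by apply: NNPP => ?; by_cycle [:: vB; vF; vK; vSn].
have nSB : ~ g vS vB by move=> ?; by_cycle [:: vB; vS; vA; vSn].
have HKn : g vH vKn by apply: NNPP => ?; by_cycle [:: vB; vH; vS; vKn].
have KnA : g vKn vA.
  apply: NNPP => ?.
  have nSnKn : ~ g vSn vKn by move=> ?; by_cycle [:: vA; vS; vKn; vSn].
  by by_cycle [:: vH; vSn; vF; vKn].
have KnHn : g vKn vHn by apply: NNPP => ?; by_cycle [:: vB; vHn; vA; vKn].
by move=> [] [] //= _ _; edge.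
Qed.

End GadgetGraph.

Section ClauseGadget.
Variables (n : nat) (cl : seq clause) (G' : vtx -> vtx -> Prop).
Hypothesis G'_sandwich : chordal_sandwich (QV n cl) (int_star n cl) (forb n cl) G'.
Variables (i j p : nat).
Hypotheses (i_range : 1 <= i <= n) (j_Delta : inDelta cl i j) (i_pos : pos cl j (posv i) = Some p).

Local Notation X := (lit_at cl j p).

Definition gadget_point (e : gadget_elt) : elt :=
  match e with
  | eMu => EMu | eDelta => EDelta | eLambda => ELambda j
  | eGammaP => EGamma j p | eGammaQ => EGamma j (p %% 3).+1
  | eAlpha => EAlpha X | eAlphaN => EAlpha (negl X)
  | eBeta => EBeta j X | eBetaN => EBeta j (negl X)
  end.

Definition gadget_vtx (v : gadget_vert) : vtx :=
  [fset gadget_point (gadget_cells v).1; gadget_point (gadget_cells v).2].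

Definition gadget_graph (u v : gadget_vert) : Prop := G' (gadget_vtx u) (gadget_vtx v).

Lemma gadget_point_inj : injective gadget_point.
Proof.
pose back x := match x with
  | EMu => eMu | EDelta => eDelta | ELambda _ => eLambda
  | EGamma _ r => if r == p then eGammaP else eGammaQ
  | EAlpha W => if W == X then eAlpha else eAlphaN
  | EBeta _ W => if W == X then eBeta else eBetaN
  end.
apply: (can_inj (g := back)); case=> /=;
  by rewrite ?eqxx ?(negbTE (succ_mod3_neq p)) ?(negbTE (negl_neq X)).
Qed.

Lemma mem_gadget_vtx e v : (gadget_point e \in gadget_vtx v) = (e \in gadget_cell_seq v).
Proof. by rewrite !inE !(inj_eq gadget_point_inj). Qed.

Lemma gadget_vtx_inj : injective gadget_vtx.
Proof.
move=> u v uv; have: all (mem (gadget_cell_seq v)) (gadget_cell_seq u).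
  by apply/allP=> e; rewrite -mem_gadget_vtx uv mem_gadget_vtx.
by case: u {uv}; case: v.
Qed.

Let X_var : X.1 = i.
Proof. exact: lit_at_pos i_pos. Qed.

Let X_pos : pos cl j X = Some p.
Proof. by rewrite (@pos_var cl j X (posv i) X_var). Qed.

Let j_range : 1 <= j <= m cl.
Proof. by case/andP: j_Delta. Qed.

Let p_range : 1 <= p <= 3.
Proof. exact: pos_range i_pos. Qed.

Lemma gadget_vtxA : gadget_vtx vA = A i.
Proof.
rewrite /gadget_vtx /=.
have [-> | ->] := lit_eq_or_negl (W' := posv i) X_var; first by [].
exact: fsetUC.
Qed.

Lemma gadget_vtxK : gadget_vtx vK = K cl j X.
Proof. by rewrite (K_lit X_pos erefl). Qed.

Lemma gadget_vtxKn : gadget_vtx vKn = K cl j (negl X).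
Proof. by rewrite (K_negl_lit X_pos erefl). Qed.

Lemma gadget_vtxL : Lopt cl j X = Some (gadget_vtx vL).
Proof. by rewrite (Lopt_lit X_pos erefl). Qed.

Lemma gadget_forb u v : gadget_separated u v -> forb n cl (gadget_vtx u) (gadget_vtx v).
Proof.
have AB : forb n cl (gadget_vtx vA) (gadget_vtx vB) by rewrite gadget_vtxA; exact: forb_A_B.
have DpB : forb n cl (gadget_vtx vDp) (gadget_vtx vB) by apply: forb_D_B j_range p_range.
have DqB : forb n cl (gadget_vtx vDq) (gadget_vtx vB).
  by apply: forb_D_B j_range _; rewrite ltn_pmod.
have HF : forb n cl (gadget_vtx vH) (gadget_vtx vF).
  by apply: (@forb_H_F n cl X _ _ j_range); rewrite X_var.
have HnF : forb n cl (gadget_vtx vHn) (gadget_vtx vF).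
  by apply: (@forb_H_F n cl (negl X) _ _ j_range); rewrite -[(negl X).1]/X.1 X_var.
have SSn : forb n cl (gadget_vtx vS) (gadget_vtx vSn).
  rewrite /gadget_vtx /=; have [-> | ->] := lit_eq_or_negl (W' := posv i) X_var; first exact: forb_S_S.
  exact/forb_sym/forb_S_S.
have KnK : forb n cl (gadget_vtx vKn) (gadget_vtx vK).
  by rewrite gadget_vtxKn gadget_vtxK; apply: forb_K_K j_range p_range.
have KnL : forb n cl (gadget_vtx vKn) (gadget_vtx vL).
  by have := @forb_K_L n cl j p j_range p_range; rewrite -gadget_vtxKn /L gadget_vtxL.
move=> /orP[] uv; [|apply: forb_sym]; move: uv; rewrite !inE;
  by repeat case/orP; move/eqP=> [-> ->].
Qed.

Lemma gadget_QV v : QV n cl (gadget_vtx v).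
Proof.
have: has (gadget_separated v) [:: vA; vB; vH; vF; vS; vSn; vK; vKn] by case: v.
by case/hasP=> w _ /gadget_forb /QV_forb.
Qed.

Lemma gadget_graph_sym u v : gadget_graph u v -> gadget_graph v u.
Proof. by case: G'_sandwich => [[G'_sym _] _ _ _]; apply: G'_sym. Qed.

Lemma gadget_graph_chordal : chordal (fun _ => True) gadget_graph.
Proof. by case: G'_sandwich => _ G'_chordal _ _; apply: chordal_comap gadget_vtx_inj gadget_QV. Qed.

Lemma gadget_graph_meets u v : u != v -> gadget_meets u v -> gadget_graph u v.
Proof.
move=> uv /hasP[e eu ev]; case: G'_sandwich => _ _ int_G' _; apply: int_G'.
split; [exact: gadget_QV | split; [exact: gadget_QV | split]].
  by rewrite (inj_eq gadget_vtx_inj).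
by apply/fset0Pn; exists (gadget_point e); rewrite inE !mem_gadget_vtx eu.
Qed.

Lemma gadget_graph_separated u v : gadget_separated u v -> ~ gadget_graph u v.
Proof. by move=> /gadget_forb uv; case: G'_sandwich => _ _ _; apply. Qed.

Local Notation by_gadget L :=
  (L _ gadget_graph_sym gadget_graph_chordal gadget_graph_meets gadget_graph_separated).

Lemma S_negl_B_of_not_K W : W.1 = i -> ~ G' (K cl j W) B -> G' (S j (negl W)) B.
Proof.
move=> W_var; have [-> | ->] := lit_eq_or_negl (etrans W_var (esym X_var)).
  by rewrite -gadget_vtxK; apply: (by_gadget gadget_SnB_of_not_KB).
by rewrite neglK -gadget_vtxKn; apply: (by_gadget gadget_SB_of_not_KnB).
Qed.

Lemma gadget_vtx_neighbour W R : W = X \/ W = negl X ->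
  R = B \/ R = A i \/ R = H W \/ R = H (negl W) \/ R = F j ->
  exists2 w, w \in [:: vB; vA; vH; vHn; vF] & R = gadget_vtx w.
Proof.
move=> W_X; case=> [->|[->|[->|[->|->]]]]; first by exists vB.
- by exists vA; rewrite ?gadget_vtxA.
- by case: W_X => ->; [exists vH | exists vHn].
- by case: W_X => ->; [exists vHn | exists vH; rewrite ?neglK].
by exists vF.
Qed.

Lemma adjacent_of_K_B W : W.1 = i -> G' (K cl j W) B ->
  forall P, (P = S j W \/ P = K cl j W \/ Lopt cl j W = Some P) ->
  forall R, (R = B \/ R = A i \/ R = H W \/ R = H (negl W) \/ R = F j) -> G' P R.
Proof.
move=> W_var; have W_X := lit_eq_or_negl (etrans W_var (esym X_var)).
move=> KB P HP R /(gadget_vtx_neighbour W_X) [w w_in ->]; move: KB HP; case: W_X => ->.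
  rewrite -gadget_vtxK gadget_vtxL => KB HP.
  have [u u_in ->] : exists2 u, u \in [:: vS; vK; vL] & P = gadget_vtx u.
    by case: HP => [->|[->|[<-]]]; [exists vS | exists vK | exists vL].
  exact: (by_gadget gadget_adjacent_of_KB).
rewrite -gadget_vtxKn (Lopt_negl_lit X_pos erefl) => KnB HP.
have [u u_in ->] : exists2 u, u \in [:: vSn; vKn] & P = gadget_vtx u.
  by case: HP => [->|[->|//]]; [exists vSn | exists vKn].
exact: (by_gadget gadget_adjacent_of_KnB).
Qed.

End ClauseGadget.

Lemma S_pos_neg_B_excl n cl (G' : vtx -> vtx -> Prop) i j j' :
  chordal_sandwich (QV n cl) (int_star n cl) (forb n cl) G' ->
  1 <= i <= n -> inDelta cl i j -> inDelta cl i j' ->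
  G' (S j (posv i)) B -> G' (S j' (negv i)) B -> False.
Proof.
case=> [[G'_sym _] G'_chordal int_G' forb_G'] i_range j_Delta j'_Delta SB S'B.
have SS' := forb_S_S i_range j_Delta j'_Delta; have AB := forb_A_B cl i_range.
have G'_meet P Q x : QV n cl P -> QV n cl Q -> P != Q -> x \in P -> x \in Q -> G' P Q.
  by move=> P_V Q_V PQ xP xQ; apply: int_G'; do !split=> //; apply/fset0Pn; exists x; rewrite inE xP.
have S_A : S j (posv i) != A i by apply: fset2_neq_r; apply/eqP; case.
have S_S' : S j (posv i) != S j' (negv i) by apply: fset2_neq; apply/eqP; case.
have S_B : S j (posv i) != B by apply: fset2_neq; apply/eqP; case.
have A_S' : A i != S j' (negv i) by apply: fset2_neq; apply/eqP; case.
have A_B : A i != B by apply: fset2_neq; apply/eqP; case.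
have S'_B : S j' (negv i) != B by apply: fset2_neq; apply/eqP; case.
have U := uniq4 S_A S_S' S_B A_S' A_B S'_B.
have S_V := QV_forb SS'; have S'_V := QV_forb (forb_sym SS').
have A_V := QV_forb AB; have B_V := QV_forb (forb_sym AB).
case: (square_chord G'_sym G'_chordal U).
- by move=> P; rewrite !inE => /or4P[] /eqP->.
(* The side conditions on 2-sets are supplied explicitly: [done] would try to decide
   their equality by computation, which is hopelessly slow. *)
- exact: (G'_meet _ _ _ S_V A_V S_A (fset21 _ _) (fset21 _ _)).
- exact: (G'_meet _ _ _ A_V S'_V A_S' (fset22 _ _) (fset21 _ _)).
- exact: S'B.
- exact: G'_sym SB.
- exact: forb_G'.
- exact: forb_G'.
Qed.

Lemma pos_of_inDelta cl i j : inDelta cl i j -> exists p, pos cl j (posv i) = Some p.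
Proof. by case/andP=> _; case: (pos cl j (posv i)) => // p _; exists p. Qed.

Theorem lemma7 (n : nat) (cl : seq clause) (G' : vtx -> vtx -> Prop) :
  wf_instance n cl ->
  chordal_sandwich (QV n cl) (int_star n cl) (forb n cl) G' ->
  forall i, 1 <= i <= n ->
  (exists W, (W = posv i \/ W = negv i) /\
     forall j, inDelta cl i j -> G' (K cl j W) B)
  /\
  (forall j W, inDelta cl i j -> (W = posv i \/ W = negv i) ->
     G' (K cl j W) B ->
     forall P, (P = S j W \/ P = K cl j W \/ Lopt cl j W = Some P) ->
     forall R, (R = B \/ R = A i \/ R = H W \/ R = H (negl W) \/ R = F j) ->
     G' P R).
Proof.
move=> _ sandwich i i_range; split; last first.
  move=> j W j_Delta W_i; have [p i_pos] := pos_of_inDelta j_Delta.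
  by apply: (adjacent_of_K_B sandwich i_range j_Delta i_pos); case: W_i => ->.
have [all_pos | not_all_pos] := classic (forall j, inDelta cl i j -> G' (K cl j (posv i)) B).
  by exists (posv i); split; [left |].
have [j0 [j0_Delta nK0B]] : exists j0, inDelta cl i j0 /\ ~ G' (K cl j0 (posv i)) B.
  apply: NNPP => none; apply: not_all_pos => j j_Delta.
  by apply: NNPP => nKB; apply: none; exists j.
exists (negv i); split=> [|j j_Delta]; first by right.
apply: NNPP => nKB.
have [p0 pos0] := pos_of_inDelta j0_Delta; have [p pos] := pos_of_inDelta j_Delta.
apply: (S_pos_neg_B_excl sandwich i_range j_Delta j0_Delta).
  exact: (S_negl_B_of_not_K sandwich i_range j_Delta pos (W := negv i)).
exact: (S_negl_B_of_not_K sandwich i_range j0_Delta pos0 (W := posv i)).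
Qed.
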